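(* For every $n\ge 3$, \[ \max\{\rho(\mathsf{C}_n),1\} = \max\{\rho(\mathsf{SC}_n),1\}, \] where $\mathsf{C}_n$ is the compacted matrix of rank $n$ and $\mathsf{SC}_n$ is the super compacted matrix of rank $n$.
   Context: $\rho(M)$ is the spectral radius. The compacted matrix of rank $n$ is the $(2n-1)\times(2n-1)$ matrix $\mathsf{C}_n=(c_{ij})$ with: $c_{ij}=1$ if $j=i+1$ and $1\le i\le n-3$; $c_{ij}=1$ if $i=n-2$ and $j\in\{n-1,n\}$; $c_{ij}=n-2$ if $i=n-1$ and $1\le j\le n$; $c_{ij}=n-1$ if $i=n-1$ and $n+1\le j\le 2n-1$; $c_{nj}=1$ for all $j$; $c_{ij}=n-1$ if $i=n+1$ and $1\le j\le n-1$; $c_{ij}=n-2$ if $i=n+1$ and $n\le j\le 2n-1$; $c_{ij}=1$ if $i=n+2$ and $j\in\{n,n+1\}$; $c_{ij}=1$ if $j=i-1$ and $n+3\le i\le 2n-1$; $c_{ij}=0$ otherwise. The super compacted matrix of rank $n$ is the $n\times n$ matrix $\mathsf{SC}_n=(s_{ij})$ with: $s_{ij}=1$ if ($i\le n-2$ and $j=i+1$) or $i=n$; $s_{ij}=2$ if $i=n-2$ and $j=n$; $s_{ij}=2n-3$ if $i=n-1$ and $j<n$; $s_{ij}=2n-4$ if $i=n-1$ and $j=n$; $s_{ij}=0$ otherwise. *)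

From HB Require Import structures.
From mathcomp Require Import all_boot all_order all_algebra.
From mathcomp Require Import algC.
Set Implicit Arguments. Unset Strict Implicit. Unset Printing Implicit Defensive.
Import Order.TTheory GRing.Theory Num.Theory.

(* Complex eigenvalues (with multiplicity) of a square matrix over algC:
   the roots of its characteristic polynomial. *)
Local Open Scope ring_scope.
Definition eigenvalues_seq (m : nat) (A : 'M[algC]_m) : seq algC :=
  sval (closed_field_poly_normal (char_poly A)).

Definition spectral_radius (m : nat) (A : 'M[algC]_m) : algC :=
  \big[Num.max/0]_(z <- eigenvalues_seq A) `|z|.
Local Close Scope ring_scope.

(* Entries of the compacted matrix, with 1-based indices i j. *)
Definition compacted_entry (n i j : nat) : nat :=
  if (1 <= i <= n - 3)%N then (if j == i.+1 then 1 else 0)%N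
  else if i == (n - 2)%N then (if (j == n - 1) || (j == n) then 1 else 0)%N
  else if i == (n - 1)%N then
    (if (1 <= j <= n)%N then n - 2 else if (n + 1 <= j <= 2 * n - 1)%N then n - 1 else 0)%N
  else if i == n then 1%N
  else if i == n.+1 then
    (if (1 <= j <= n - 1)%N then n - 1 else if (n <= j <= 2 * n - 1)%N then n - 2 else 0)%N
  else if i == n.+2 then (if (j == n) || (j == n.+1) then 1 else 0)%N
  else if (n + 3 <= i <= 2 * n - 1)%N then (if j == i.-1 then 1 else 0)%N
  else 0%N.

Definition compacted (n : nat) : 'M[algC]_(2 * n - 1) :=
  (\matrix_(i, j) (compacted_entry n i.+1 j.+1)%:R)%R.

(* Entries of the super compacted matrix, with 1-based indices i j. *)
Definition super_compacted_entry (n i j : nat) : nat :=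
  if ((i <= n - 2)%N && (j == i.+1)) || (i == n) then 1%N
  else if (i == n - 2) && (j == n) then 2%N
  else if (i == n - 1) && (j < n)%N then (2 * n - 3)%N
  else if (i == n - 1) && (j == n) then (2 * n - 4)%N
  else 0%N.

Definition super_compacted (n : nat) : 'M[algC]_n :=
  (\matrix_(i, j) (super_compacted_entry n i.+1 j.+1)%:R)%R.

From HB Require Import structures.
From mathcomp Require Import all_boot all_order all_algebra.
From mathcomp Require Import algC.
From mathcomp Require Import zify ring.
Import Order.TTheory GRing.Theory Num.Theory.
Local Open Scope ring_scope.

(* C_n commutes with the mirror permutation k <-> 2n-k of {1, ..., 2n-1}, and
   SC_n is C_n restricted to mirror-symmetric vectors, written in the coordinates
   f k + f (2n-k) (k < n) and f n.  So folding an eigenvector of C_n gives a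
   solution of the eigen-equations of SC_n, and unfolding an eigenvector of
   SC_n gives one of C_n.  An eigenvalue z of C_n whose eigenvector folds to 0
   has a mirror-antisymmetric eigenvector f: then f n = 0, f k = z^(k-1) f 1
   for k < n, and row n-1 of C_n reduces to (1 + z + ... + z^(n-1)) f 1 = 0,
   so z is an n-th root of unity, invisible to max (rho _) 1. *)

Lemma char_poly_trmx (F : fieldType) m (A : 'M[F]_m) : char_poly A^T = char_poly A.
Proof.
rewrite /char_poly -det_tr; congr (\det _); apply/matrixP => i j.
by rewrite !mxE eq_sym.
Qed.

Section SpectralRadius.
Variable m : nat.
Implicit Types (A : 'M[algC]_m) (z b : algC).

Lemma mem_eigenvalues_seq A z : (z \in eigenvalues_seq A) = root (char_poly A) z.
Proof.
rewrite /eigenvalues_seq; case: closed_field_poly_normal => r /= ->.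
by rewrite (monicP (char_poly_monic A)) scale1r root_prod_XsubC.
Qed.

Lemma eigenvalues_seqP A z :
  reflect (exists2 v : 'cV_m, A *m v = z *: v & v != 0) (z \in eigenvalues_seq A).
Proof.
rewrite mem_eigenvalues_seq -char_poly_trmx -eigenvalue_root_char.
apply: (iffP eigenvalueP) => [[w Aw nz_w] | [v Av nz_v]].
  by exists w^T; rewrite ?trmx_eq0 // -[A]trmxK -trmx_mul Aw linearZ.
by exists v^T; rewrite ?trmx_eq0 // -trmx_mul Av linearZ.
Qed.

Lemma spectral_radius_real A : spectral_radius A \is Num.real.
Proof. by apply: bigmax_real => // z _; apply: normr_real. Qed.

Lemma norm_le_spectral_radius A z :
  z \in eigenvalues_seq A -> `|z| <= spectral_radius A.
Proof.
rewrite /spectral_radius; elim: (eigenvalues_seq A) => // a s IH.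
have real_s : \big[Num.max/0]_(x <- s) `|x| \is Num.real.
  by apply: bigmax_real => // x _; apply: normr_real.
rewrite inE big_cons comparable_le_max ?real_comparable ?normr_real //.
by case/orP=> [/eqP->|/IH->]; rewrite ?lexx ?orbT.
Qed.

Lemma spectral_radius_le A b : 0 <= b ->
  (forall z, z \in eigenvalues_seq A -> `|z| <= b) -> spectral_radius A <= b.
Proof.
move=> b_ge0 le_b; suff /andP[] : 0 <= spectral_radius A <= b by [].
rewrite /spectral_radius big_seq.
apply: (big_ind (fun x : algC => 0 <= x <= b)) => [|x y|z /le_b ->].
- by rewrite lexx.
- case/andP=> x_ge0 x_le /andP[y_ge0 y_le].
  have xy : x >=< y by rewrite real_comparable ?ger0_real.
  by rewrite comparable_le_max // comparable_ge_max // x_ge0 x_le y_le.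
- by rewrite andbT.
Qed.

End SpectralRadius.

Lemma max_spectral_radius1_le m m' (A : 'M[algC]_m) (B : 'M[algC]_m') :
  (forall z, z \in eigenvalues_seq A -> `|z| <= 1 \/ z \in eigenvalues_seq B) ->
  Num.max (spectral_radius A) 1 <= Num.max (spectral_radius B) 1.
Proof.
move=> eigA; have cmpB : spectral_radius B >=< 1.
  by rewrite real_comparable ?spectral_radius_real.
have le_max1 : 1 <= Num.max (spectral_radius B) 1.
  by rewrite comparable_le_max // lexx orbT.
have le_maxB : spectral_radius B <= Num.max (spectral_radius B) 1.
  by rewrite comparable_le_max // lexx.
rewrite comparable_ge_max ?real_comparable ?spectral_radius_real // le_max1 andbT.
apply: spectral_radius_le => [|z /eigA [z_le1 | /norm_le_spectral_radius z_le]].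
- exact: le_trans ler01 le_max1.
- exact: le_trans z_le1 le_max1.
- exact: le_trans z_le le_maxB.
Qed.

Lemma big_nat_delta (R : pzSemiRingType) a b k (F : nat -> R) : (a <= k < b)%N ->
  \sum_(a <= j < b) (j == k)%:R * F j = F k.
Proof.
move=> k_in; rewrite (eq_bigr (fun j => if j == k then F j else 0)).
  by rewrite -big_mkcond big_nat1_eq k_in.
by move=> j _; case: eqP; rewrite ?mul1r ?mul0r.
Qed.

Lemma big_nat_const_coef (R : pzSemiRingType) a b c (E : nat -> nat) (F : nat -> R) :
  (forall j, (a <= j < b)%N -> E j = c) ->
  \sum_(a <= j < b) (E j)%:R * F j = c%:R * \sum_(a <= j < b) F j.
Proof. by move=> Ec; rewrite mulr_sumr; apply: eq_big_nat => j /Ec ->. Qed.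

Lemma big_nat_mirror n (F : nat -> algC) :
  \sum_(1 <= j < n) F (2 * n - j)%N = \sum_(n.+1 <= j < 2 * n) F j.
Proof.
rewrite big_nat_rev -{1}(add1n n) big_addn (_ : 2 * n - n = n)%N; last lia.
by apply: eq_big_nat => j j_in; congr F; lia.
Qed.

(* Vectors are functions on nat, indexed from 1 as in the paper; values
   outside {1, ..., m} are irrelevant. *)
Definition nonzero_on (m : nat) (f : nat -> algC) : Prop :=
  exists2 k, (1 <= k <= m)%N & f k != 0.

Section NatIndexedMatrix.
Variables (m : nat) (e : nat -> nat -> nat).

Definition nat_mx : 'M[algC]_m := \matrix_(i, j) (e i.+1 j.+1)%:R.

Definition nat_mxv (f : nat -> algC) (i : nat) : algC :=
  \sum_(1 <= j < m.+1) (e i j)%:R * f j.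

Definition nat_eigeneq (z : algC) (f : nat -> algC) : Prop :=
  forall i, (1 <= i <= m)%N -> nat_mxv f i = z * f i.

Lemma nat_mxvE {v : 'cV_m} {f : nat -> algC} : (forall j : 'I_m, f j.+1 = v j 0) ->
  forall i : 'I_m, (nat_mx *m v) i 0 = nat_mxv f i.+1.
Proof.
move=> fv i; rewrite mxE /nat_mxv big_add1 /= big_mkord.
by apply: eq_bigr => j _; rewrite mxE fv.
Qed.

Lemma eigenvalues_nat_mxP z :
  z \in eigenvalues_seq nat_mx <-> exists2 f, nonzero_on m f & nat_eigeneq z f.
Proof.
split=> [/eigenvalues_seqP [v Av /matrix0Pn [j [k vj]]] | [f [k k_in fk] eqf]].
  pose f k := if k is k'.+1 then oapp (v^~ 0) 0 (insub k') else 0.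
  have fv (i : 'I_m) : f i.+1 = v i 0 by rewrite /f valK.
  exists f => [|i /andP[i_gt0 i_le]].
    by exists j.+1; [exact: ltn_ord | rewrite fv -(ord1 k)].
  have lt_i : (i.-1 < m)%N by rewrite prednK.
  have -> : i = (Ordinal lt_i).+1 by rewrite /= prednK.
  by rewrite -(nat_mxvE fv) Av mxE fv.
apply/eigenvalues_seqP; exists (\col_(j < m) f j.+1).
  have fv (j : 'I_m) : f j.+1 = (\col_(j < m) f j.+1) j 0 by rewrite mxE.
  apply/colP => i; rewrite (nat_mxvE fv) [RHS]mxE -fv eqf //.
  exact: ltn_ord.
have lt_k : (k.-1 < m)%N by case/andP: k_in => k_gt0; rewrite prednK.
by apply/matrix0Pn; exists (Ordinal lt_k), 0; rewrite mxE /= prednK //; case/andP: k_in.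
Qed.

End NatIndexedMatrix.

Ltac entry_cases := rewrite /compacted_entry /super_compacted_entry;
  repeat (case: ifP => ?); repeat (case: eqP => ?); lia.

Section Rows.
Context {n : nat} {f : nat -> algC}.
Hypothesis n_ge3 : (3 <= n)%N.

Lemma compacted_mxvE i : nat_mxv (2 * n - 1) (compacted_entry n) f i =
  \sum_(1 <= j < 2 * n) (compacted_entry n i j)%:R * f j.
Proof. by rewrite /nat_mxv (_ : (2 * n - 1).+1 = 2 * n)%N //; lia. Qed.

Lemma compacted_mxv_lo i : (1 <= i <= n - 3)%N ->
  nat_mxv (2 * n - 1) (compacted_entry n) f i = f i.+1.
Proof.
move=> i_in; rewrite compacted_mxvE -(@big_nat_delta _ 1 (2 * n) _ f); last lia.
by apply: eq_big_nat => j j_in; congr (_%:R * _); entry_cases.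
Qed.

Lemma compacted_mxv_nm2 :
  nat_mxv (2 * n - 1) (compacted_entry n) f (n - 2) = f (n - 1)%N + f n.
Proof.
rewrite compacted_mxvE -(@big_nat_delta _ 1 (2 * n) (n - 1) f); last lia.
rewrite -(@big_nat_delta _ 1 (2 * n) n f); last lia.
rewrite -big_split; apply: eq_big_nat => j j_in /=.
by rewrite -mulrDl -natrD; congr (_%:R * _); entry_cases.
Qed.

Lemma compacted_mxv_nm1 : nat_mxv (2 * n - 1) (compacted_entry n) f (n - 1) =
  (n - 2)%:R * (\sum_(1 <= j < n) f j + f n) +
  (n - 1)%:R * \sum_(n.+1 <= j < 2 * n) f j.
Proof.
rewrite compacted_mxvE (@big_cat_nat _ _ _ n.+1) /=; try lia.
rewrite (@big_nat_const_coef _ 1 n.+1 (n - 2)); last by move=> j j_in; entry_cases.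
rewrite (@big_nat_const_coef _ n.+1 (2 * n) (n - 1)); last by move=> j j_in; entry_cases.
by rewrite big_nat_recr //=; lia.
Qed.

Lemma compacted_mxv_n : nat_mxv (2 * n - 1) (compacted_entry n) f n =
  \sum_(1 <= j < n) f j + f n + \sum_(n.+1 <= j < 2 * n) f j.
Proof.
rewrite compacted_mxvE (@big_cat_nat _ _ _ n.+1) /=; try lia.
rewrite (@big_nat_const_coef _ 1 n.+1 1); last by move=> j j_in; entry_cases.
rewrite (@big_nat_const_coef _ n.+1 (2 * n) 1); last by move=> j j_in; entry_cases.
by rewrite !mul1r big_nat_recr //=; lia.
Qed.

Lemma compacted_mxv_nS : nat_mxv (2 * n - 1) (compacted_entry n) f n.+1 =
  (n - 1)%:R * \sum_(1 <= j < n) f j +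
  (n - 2)%:R * (f n + \sum_(n.+1 <= j < 2 * n) f j).
Proof.
rewrite compacted_mxvE (@big_cat_nat _ _ _ n) /=; try lia.
rewrite (@big_nat_const_coef _ 1 n (n - 1)); last by move=> j j_in; entry_cases.
rewrite (@big_nat_const_coef _ n (2 * n) (n - 2)); last by move=> j j_in; entry_cases.
by rewrite [X in _ + _ * X = _]big_ltn //=; lia.
Qed.

Lemma compacted_mxv_nSS :
  nat_mxv (2 * n - 1) (compacted_entry n) f n.+2 = f n + f n.+1.
Proof.
rewrite compacted_mxvE -(@big_nat_delta _ 1 (2 * n) n f); last lia.
rewrite -(@big_nat_delta _ 1 (2 * n) n.+1 f); last lia.
rewrite -big_split; apply: eq_big_nat => j j_in /=.
by rewrite -mulrDl -natrD; congr (_%:R * _); entry_cases.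
Qed.

Lemma compacted_mxv_hi i : (n + 3 <= i <= 2 * n - 1)%N ->
  nat_mxv (2 * n - 1) (compacted_entry n) f i = f i.-1.
Proof.
move=> i_in; rewrite compacted_mxvE -(@big_nat_delta _ 1 (2 * n) _ f); last lia.
by apply: eq_big_nat => j j_in; congr (_%:R * _); entry_cases.
Qed.

Lemma super_compacted_mxv_lo i : (1 <= i <= n - 3)%N ->
  nat_mxv n (super_compacted_entry n) f i = f i.+1.
Proof.
move=> i_in; rewrite /nat_mxv -(@big_nat_delta _ 1 n.+1 _ f); last lia.
by apply: eq_big_nat => j j_in; congr (_%:R * _); entry_cases.
Qed.

Lemma super_compacted_mxv_nm2 :
  nat_mxv n (super_compacted_entry n) f (n - 2) = f (n - 1)%N + 2%:R * f n.
Proof.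
rewrite /nat_mxv -(@big_nat_delta _ 1 n.+1 (n - 1) f); last lia.
rewrite -(@big_nat_delta _ 1 n.+1 n f); last lia.
rewrite mulr_sumr -big_split; apply: eq_big_nat => j j_in /=.
by rewrite mulrA -natrM -mulrDl -natrD; congr (_%:R * _); entry_cases.
Qed.

Lemma super_compacted_mxv_nm1 : nat_mxv n (super_compacted_entry n) f (n - 1) =
  (2 * n - 3)%:R * \sum_(1 <= j < n) f j + (2 * n - 4)%:R * f n.
Proof.
rewrite /nat_mxv big_nat_recr /=; last lia.
rewrite (@big_nat_const_coef _ 1 n (2 * n - 3)); last by move=> j j_in; entry_cases.
by congr (_ + _); congr (_%:R * _); entry_cases.
Qed.

Lemma super_compacted_mxv_n :
  nat_mxv n (super_compacted_entry n) f n = \sum_(1 <= j < n) f j + f n.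
Proof.
rewrite /nat_mxv big_nat_recr /=; last lia.
rewrite (@big_nat_const_coef _ 1 n 1) ?mul1r; last by move=> j j_in; entry_cases.
by rewrite (_ : super_compacted_entry n n n = 1)%N ?mul1r //; entry_cases.
Qed.

End Rows.

Definition mirror_fold n (f : nat -> algC) k : algC :=
  if (k < n)%N then f k + f (2 * n - k)%N else f n.

(* The middle entry is doubled, so that mirror_fold n (mirror_unfold n u) = 2 u. *)
Definition mirror_unfold n (u : nat -> algC) k : algC :=
  if (k < n)%N then u k else if k == n then 2%:R * u n else u (2 * n - k)%N.

Section Folding.
Context {n : nat} {z : algC}.
Hypothesis n_ge3 : (3 <= n)%N.

Lemma mirror_fold_eigeneq f :
  nat_eigeneq (2 * n - 1) (compacted_entry n) z f ->
  nat_eigeneq n (super_compacted_entry n) z (mirror_fold n f).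
Proof.
move=> Cf i i_in.
have eq_lo k : (1 <= k <= n - 3)%N -> f k.+1 = z * f k.
  by move=> k_in; rewrite -(compacted_mxv_lo n_ge3 _ k_in) Cf //; lia.
have eq_hi k : (n + 3 <= k <= 2 * n - 1)%N -> f k.-1 = z * f k.
  by move=> k_in; rewrite -(compacted_mxv_hi n_ge3 _ k_in) Cf //; lia.
have eq_nm2 : f (n - 1)%N + f n = z * f (n - 2)%N.
  by rewrite -(compacted_mxv_nm2 n_ge3) Cf //; lia.
have eq_nm1 := compacted_mxv_nm1 (f := f) n_ge3; rewrite Cf in eq_nm1; last lia.
have eq_n := compacted_mxv_n (f := f) n_ge3; rewrite Cf in eq_n; last lia.
have eq_nS := compacted_mxv_nS (f := f) n_ge3; rewrite Cf in eq_nS; last lia.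
have eq_nSS := compacted_mxv_nSS (f := f) n_ge3; rewrite Cf in eq_nSS; last lia.
have sum_fold : \sum_(1 <= j < n) mirror_fold n f j =
    \sum_(1 <= j < n) f j + \sum_(n.+1 <= j < 2 * n) f j.
  rewrite -big_nat_mirror -big_split; apply: eq_big_nat => j j_in.
  by rewrite /mirror_fold ifT //; lia.
rewrite /mirror_fold.
case: (leqP i (n - 3)) => [i_le | i_gt].
  rewrite (super_compacted_mxv_lo n_ge3); last lia.
  rewrite !ifT; try lia.
  rewrite eq_lo; last lia.
  by rewrite (_ : (2 * n - i.+1 = (2 * n - i).-1)%N) ?eq_hi ?mulrDr //; lia.
have [->|[->|->]] : (i = n - 2 \/ i = n - 1 \/ i = n)%N by lia.
- rewrite (super_compacted_mxv_nm2 n_ge3) /mirror_fold ltnn !ifT; try lia.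
  rewrite (_ : (2 * n - (n - 1) = n.+1)%N); last lia.
  rewrite (_ : (2 * n - (n - 2) = n.+2)%N); last lia.
  by rewrite mulrDr -eq_nm2 eq_nSS; ring.
- rewrite (super_compacted_mxv_nm1 n_ge3) sum_fold /mirror_fold ltnn ifT; last lia.
  rewrite (_ : (2 * n - (n - 1) = n.+1)%N); last lia.
  rewrite [in RHS]mulrDr eq_nm1 eq_nS.
  rewrite (_ : (2 * n - 3 = (n - 2) + (n - 1))%N); last lia.
  by rewrite (_ : (2 * n - 4 = (n - 2) + (n - 2))%N) ?natrD; [ring | lia].
- by rewrite (super_compacted_mxv_n n_ge3) sum_fold /mirror_fold ltnn eq_n; ring.
Qed.

Lemma compacted_eigeneq_geometric f :
  nat_eigeneq (2 * n - 1) (compacted_entry n) z f -> f n = 0 ->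
  forall k, (k < n - 1)%N -> f k.+1 = z ^+ k * f 1%N.
Proof.
move=> Cf fn0; elim=> [|k IH] k_lt; first by rewrite expr0 mul1r.
rewrite exprS -mulrA -IH; last lia.
have [k_le | k_gt] := leqP k.+1 (n - 3).
  by rewrite -(compacted_mxv_lo n_ge3 k.+1) ?Cf //; lia.
rewrite (_ : k.+2 = n - 1)%N; last lia.
rewrite (_ : k.+1 = n - 2)%N; last lia.
by rewrite -[LHS]addr0 -fn0 -(compacted_mxv_nm2 n_ge3) Cf //; lia.
Qed.

Lemma mirror_fold_eq0_expr_eq1 f :
  nat_eigeneq (2 * n - 1) (compacted_entry n) z f -> nonzero_on (2 * n - 1) f ->
  (forall k, (1 <= k <= n)%N -> mirror_fold n f k = 0) -> z ^+ n = 1.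
Proof.
move=> Cf [k0 k0_in fk0] fold0.
have fn0 : f n = 0 by have := fold0 n; rewrite /mirror_fold ltnn; apply; lia.
have f_mirror k : (1 <= k < n)%N -> f (2 * n - k)%N = - f k.
  move=> k_in; have : mirror_fold n f k = 0 by apply: fold0; lia.
  rewrite /mirror_fold ifT; last lia.
  by move/eqP; rewrite addrC addr_eq0 => /eqP.
have geom := compacted_eigeneq_geometric _ Cf fn0.
pose S := \sum_(j < n.-1) z ^+ j.
have sum_lo : \sum_(1 <= j < n) f j = S * f 1%N.
  rewrite big_add1 /= big_mkord mulr_suml; apply: eq_bigr => j _.
  by apply: geom; have := ltn_ord j; lia.
have sum_hi : \sum_(n.+1 <= j < 2 * n) f j = - (S * f 1%N).
  rewrite -big_nat_mirror -sum_lo -sumrN.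
  by apply: eq_big_nat => j j_in; apply: f_mirror; lia.
have f1_neq0 : f 1%N != 0.
  apply: contraNneq fk0 => f1_eq0.
  have f_lo k : (1 <= k < n)%N -> f k = 0.
    move=> k_in; have -> : k = k.-1.+1 by lia.
    by rewrite geom ?f1_eq0 ?mulr0 //; lia.
  apply/eqP; have [k0_lt | k0_gt | ->] := ltngtP k0 n; [apply: f_lo; lia | | exact: fn0].
  have k0_le : (k0 <= 2 * n)%N by lia.
  have k0_mirror : (1 <= 2 * n - k0 < n)%N by lia.
  by rewrite -(subKn k0_le) f_mirror // f_lo ?oppr0.
have f_nm1 : f (n - 1)%N = z ^+ (n - 2) * f 1%N.
  by rewrite (_ : n - 1 = (n - 2).+1)%N 1?geom //; lia.
have row_nm1 := compacted_mxv_nm1 (f := f) n_ge3.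
rewrite Cf in row_nm1; last lia.
rewrite sum_lo sum_hi fn0 addr0 f_nm1 in row_nm1.
have coef : (n - 1)%:R = (n - 2)%:R + 1 :> algC.
  by rewrite natr1; congr _%:R; lia.
have geom_sum0 : (\sum_(j < n) z ^+ j) * f 1%N = 0.
  rewrite -(prednK (_ : 0 < n)%N) ?big_ord_recr /= -/S; last lia.
  rewrite (_ : n.-1 = (n - 2).+1)%N ?exprS; last lia.
  by rewrite mulrDl -mulrA row_nm1 coef; ring.
move/eqP: geom_sum0; rewrite mulf_eq0 (negbTE f1_neq0) orbF => /eqP sum0.
by apply/eqP; rewrite -subr_eq0 subrX1 sum0 mulr0.
Qed.

Lemma mirror_unfold_nonzero u :
  nonzero_on n u -> nonzero_on (2 * n - 1) (mirror_unfold n u).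
Proof.
case=> k k_in uk; rewrite /mirror_unfold.
have [k_lt | k_gt | k_eq] := ltngtP k n.
- by exists k; rewrite ?k_lt //; lia.
- lia.
- by exists n; rewrite ?ltnn ?eqxx -?k_eq ?mulf_neq0 ?pnatr_eq0 //; lia.
Qed.

Lemma mirror_unfold_eigeneq u :
  nat_eigeneq n (super_compacted_entry n) z u ->
  nat_eigeneq (2 * n - 1) (compacted_entry n) z (mirror_unfold n u).
Proof.
move=> SCu i i_in.
have eq_lo k : (1 <= k <= n - 3)%N -> u k.+1 = z * u k.
  by move=> k_in; rewrite -(super_compacted_mxv_lo n_ge3 _ k_in) SCu //; lia.
have eq_nm2 := super_compacted_mxv_nm2 (f := u) n_ge3.
have eq_nm1 := super_compacted_mxv_nm1 (f := u) n_ge3.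
have eq_n := super_compacted_mxv_n (f := u) n_ge3.
rewrite SCu in eq_nm2; last lia.
rewrite SCu in eq_nm1; last lia.
rewrite SCu in eq_n; last lia.
set U := \sum_(1 <= j < n) u j in eq_nm1 eq_n.
have unfold_lo k : (k < n)%N -> mirror_unfold n u k = u k.
  by move=> k_lt; rewrite /mirror_unfold k_lt.
have unfold_n : mirror_unfold n u n = 2%:R * u n by rewrite /mirror_unfold ltnn eqxx.
have unfold_hi k : (n < k)%N -> mirror_unfold n u k = u (2 * n - k)%N.
  by move=> k_gt; rewrite /mirror_unfold ifF ?ifF //; lia.
have sum_lo : \sum_(1 <= j < n) mirror_unfold n u j = U.
  by apply: eq_big_nat => j j_in; rewrite unfold_lo //; lia.
have sum_hi : \sum_(n.+1 <= j < 2 * n) mirror_unfold n u j = U.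
  rewrite -big_nat_mirror; apply: eq_big_nat => j j_in.
  by rewrite unfold_hi; [congr u | ]; lia.
have [i_le | i_gt] := leqP i (n - 3).
  by rewrite (compacted_mxv_lo n_ge3) ?unfold_lo ?eq_lo //; lia.
have [i_ge | i_lt] := leqP (n + 3) i.
  rewrite (compacted_mxv_hi n_ge3) ?unfold_hi; try lia.
  by rewrite (_ : 2 * n - i.-1 = (2 * n - i).+1)%N ?eq_lo //; lia.
have [->|[->|[->|[->|->]]]] :
  (i = n - 2 \/ i = n - 1 \/ i = n \/ i = n.+1 \/ i = n.+2)%N by lia.
- by rewrite (compacted_mxv_nm2 n_ge3) unfold_n !unfold_lo ?eq_nm2 //; lia.
- rewrite (compacted_mxv_nm1 n_ge3) sum_lo sum_hi unfold_n unfold_lo ?eq_nm1; last lia.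
  rewrite (_ : 2 * n - 3 = (n - 2) + (n - 1))%N; last lia.
  by rewrite (_ : 2 * n - 4 = (n - 2) + (n - 2))%N ?natrD; [ring | lia].
- by rewrite (compacted_mxv_n n_ge3) sum_lo sum_hi unfold_n mulrCA eq_n; ring.
- rewrite (compacted_mxv_nS n_ge3) sum_lo sum_hi unfold_n unfold_hi //.
  rewrite (_ : 2 * n - n.+1 = n - 1)%N ?eq_nm1; last lia.
  rewrite (_ : 2 * n - 3 = (n - 2) + (n - 1))%N; last lia.
  by rewrite (_ : 2 * n - 4 = (n - 2) + (n - 2))%N ?natrD; [ring | lia].
- rewrite (compacted_mxv_nSS n_ge3) unfold_n !unfold_hi //; try lia.
  rewrite (_ : 2 * n - n.+1 = n - 1)%N; last lia.
  by rewrite (_ : 2 * n - n.+2 = n - 2)%N ?eq_nm2; [ring | lia].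
Qed.

End Folding.

Lemma compacted_eigenvalue_cases n z : (3 <= n)%N ->
  z \in eigenvalues_seq (compacted n) ->
  `|z| <= 1 \/ z \in eigenvalues_seq (super_compacted n).
Proof.
move=> n_ge3 /(eigenvalues_nat_mxP _ (compacted_entry n)) [f f_nz Cf].
have [/hasP [k k_in fold_k] | /hasPn fold0] :=
  boolP (has (fun k => mirror_fold n f k != 0) (iota 1 n)).
  right; apply/(eigenvalues_nat_mxP _ (super_compacted_entry n)).
  exists (mirror_fold n f); last exact: mirror_fold_eigeneq.
  by exists k => //; move: k_in; rewrite mem_iota; lia.
left; have zn : z ^+ n = 1.
  apply: (mirror_fold_eq0_expr_eq1 n_ge3 _ Cf f_nz) => k k_in.
  by apply/eqP/negbNE/fold0; rewrite mem_iota; lia.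
have : `|z| ^+ n == 1 by rewrite -normrX zn normr1.
have n_gt0 : (0 < n)%N by lia.
by rewrite pexpr_eq1 // => /eqP ->.
Qed.

Lemma super_compacted_eigenvalue_compacted n z : (3 <= n)%N ->
  z \in eigenvalues_seq (super_compacted n) -> z \in eigenvalues_seq (compacted n).
Proof.
move=> n_ge3 /(eigenvalues_nat_mxP _ (super_compacted_entry n)) [u u_nz SCu].
apply/(eigenvalues_nat_mxP _ (compacted_entry n)); exists (mirror_unfold n u).
  exact: mirror_unfold_nonzero.
exact: mirror_unfold_eigeneq.
Qed.

Theorem proposition5p1 (n : nat) (hn : (3 <= n)%N) :
  Num.max (spectral_radius (compacted n)) 1 =
  Num.max (spectral_radius (super_compacted n)) 1.
Proof.
apply/le_anti/andP; split; apply: max_spectral_radius1_le => z.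
  exact: compacted_eigenvalue_cases.
by move=> SCz; right; apply: super_compacted_eigenvalue_compacted SCz.
Qed.
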